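(* Let $\eta_2=\int_1^\infty\frac{\mathrm{d}t}{\sqrt{t^4-1}}$ and let $\mathrm{cleafh}_2:(-\eta_2,\eta_2)\to\mathbb{R}$ be the hyperbolic leaf function of basis $2$. For every real $l$ with $2l\in(-\eta_2,\eta_2)$, writing $C=\mathrm{cleafh}_2(l)$, $$\mathrm{cleafh}_2(2l)=\frac{C^4+2C^2-1}{-C^4+2C^2+1}.$$
   Context: For a natural number $n$, let $\eta_n=\int_1^\infty\frac{\mathrm{d}t}{\sqrt{t^{2n}-1}}$. The hyperbolic leaf function $\mathrm{cleafh}_n$ is the solution $r(l)$ on $(-\eta_n,\eta_n)$ of $\frac{\mathrm{d}^2r}{\mathrm{d}l^2}=n\,r^{2n-1}$ with $r(0)=1$, $r'(0)=0$; it is even, and for $l\ge0$ it is the inverse of $r\mapsto\int_1^r\frac{\mathrm{d}t}{\sqrt{t^{2n}-1}}$, $r\ge1$. *)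

From Stdlib Require Import Reals.
From Coquelicot Require Import Coquelicot.
Open Scope R_scope.

Definition eta (n : nat) : R :=
  RInt_gen (fun t => / sqrt (t ^ (2 * n) - 1)) (at_right 1) (Rbar_locally p_infty).

Definition is_cleafh (n : nat) (r : R -> R) : Prop :=
  exists r' : R -> R,
    (forall l, - eta n < l < eta n ->
       is_derive r l (r' l) /\ is_derive r' l (INR n * r l ^ (2 * n - 1))) /\
    r 0 = 1 /\ r' 0 = 0.

(** The first integral [r'^2 = r^4 - 1] shows that [r] never vanishes, so
    [r > 0] by continuity and [r 0 = 1].  For fixed [s], Euler's addition
    method for this quartic shows that
      [leaf_ratio (r u) (r (s - u)) (r' u) (r' (s - u))]
    does not depend on [u].  At [u = 0] it equals [1 / r s]; at [u = s / 2],
    after eliminating [r'(s/2)^2], it is a rational function of [C = r (s/2)],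
    and equating the two values is the duplication formula. *)

From Stdlib Require Import Reals Lra Ranalysis5.
From Coquelicot Require Import Coquelicot.
Open Scope R_scope.

Lemma eq_is_derive_segment (f : R -> R) (a b : R) :
  (forall t, a <= t <= b \/ b <= t <= a -> is_derive f t 0) -> f a = f b.
Proof.
  intros Hf.
  destruct (Rtotal_order a b) as [Hab | [-> | Hba]].
  - apply eq_is_derive; [intros t Ht; apply Hf; lra | exact Hab].
  - reflexivity.
  - symmetry; apply eq_is_derive; [intros t Ht; apply Hf; lra | exact Hba].
Qed.

Lemma pos_of_nonvanishing_segment (f : R -> R) (a b : R) :
  (forall t, a <= t <= b \/ b <= t <= a -> continuity_pt f t /\ f t <> 0) ->
  0 < f a -> 0 < f b.
Proof.
  intros Hf Ha.
  destruct (Rtotal_order (f b) 0) as [Hb | [Hb | Hb]]; [exfalso | | exact Hb].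
  - destruct (Rtotal_order a b) as [Hab | [-> | Hba]]; [| lra |].
    + destruct (IVT_interv (fun t => - f t) a b) as [z [Hz Ez]]; try lra.
      * intros t Ht; apply continuity_pt_opp, Hf; lra.
      * apply (Hf z); [lra | lra].
    + destruct (IVT_interv f b a) as [z [Hz Ez]]; try lra.
      * intros t Ht; apply Hf; lra.
      * apply (Hf z); [lra | exact Ez].
  - exfalso; apply (Hf b); [lra | exact Hb].
Qed.

(* [auto_derive] leaves [Derive f t] with [t] only convertible to the point
   of the matching [is_derive] hypothesis (e.g. [s + - u] for [s - u]). *)
Ltac derive_from_hyps :=
  repeat match goal with
  | |- context [Derive ?f ?t] =>
      match goal with
      | H : is_derive _ _ _ |- _ => rewrite (is_derive_unique f t _ H)
      end
  end.

Definition leaf_ratio (x y X Y : R) : R :=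
  ((x ^ 2 + 1) * (y ^ 2 + 1) - x * y * X * Y) /
  (x * y * (x ^ 2 + 1) * (y ^ 2 + 1) + X * Y).

Lemma leaf_ratio_den_pos (x y X Y : R) :
  0 < x -> 0 < y -> X ^ 2 = x ^ 4 - 1 -> Y ^ 2 = y ^ 4 - 1 ->
  0 < x * y * (x ^ 2 + 1) * (y ^ 2 + 1) + X * Y.
Proof.
  intros Hx Hy HX HY.
  set (P := x * y * (x ^ 2 + 1) * (y ^ 2 + 1)).
  assert (HP : 0 < P) by (unfold P; repeat apply Rmult_lt_0_compat; nra).
  (* [|X Y| < P], because [x^4 - 1 < x^2 (x^2 + 1)^2] and likewise for [y]. *)
  assert (HXY : (X * Y) ^ 2 < P ^ 2).
  { replace ((X * Y) ^ 2) with ((x ^ 4 - 1) * (y ^ 4 - 1)) by (rewrite <- HX, <- HY; ring).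
    replace (P ^ 2) with (x ^ 2 * (x ^ 2 + 1) ^ 2 * (y ^ 2 * (y ^ 2 + 1) ^ 2))
      by (unfold P; ring).
    apply Rle_lt_trans with (x ^ 2 * (x ^ 2 + 1) ^ 2 * (y ^ 4 - 1)).
    - apply Rmult_le_compat_r; nra.
    - apply Rmult_lt_compat_l; nra. }
  nra.
Qed.

Lemma leaf_ratio_diag (x X : R) :
  X ^ 2 = x ^ 4 - 1 ->
  leaf_ratio x x X X = (- x ^ 4 + 2 * x ^ 2 + 1) / (x ^ 4 + 2 * x ^ 2 - 1).
Proof.
  intros HX.
  assert (Hx2 : 1 <= x ^ 2) by nra.
  unfold leaf_ratio.
  replace (x * x * X * X) with (x ^ 2 * X ^ 2) by ring.
  replace (X * X) with (X ^ 2) by ring.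
  rewrite HX; field; nra.
Qed.

Section Duplication.

Variables (r r' : R -> R) (e : R).

Hypothesis r_derive :
  forall l, - e < l < e -> is_derive r l (r' l) /\ is_derive r' l (2 * r l ^ 3).
Hypothesis r_0 : r 0 = 1.
Hypothesis r'_0 : r' 0 = 0.

Lemma leaf_energy t : - e < t < e -> r' t ^ 2 = r t ^ 4 - 1.
Proof.
  intros Ht.
  assert (Hconst : r' t ^ 2 - r t ^ 4 = r' 0 ^ 2 - r 0 ^ 4).
  { symmetry.
    apply (eq_is_derive_segment (fun u => r' u ^ 2 - r u ^ 4)).
    intros u Hu.
    destruct (r_derive u) as [Hr Hr']; [lra |].
    auto_derive; [repeat split; eexists; eassumption |].
    derive_from_hyps; ring. }
  rewrite r_0, r'_0 in Hconst; lra.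
Qed.

Lemma leaf_pos t : - e < t < e -> 0 < r t.
Proof.
  intros Ht.
  apply (pos_of_nonvanishing_segment r 0 t); [| lra].
  intros u Hu.
  assert (Hu' : - e < u < e) by lra.
  split.
  - apply continuity_pt_filterlim, (@ex_derive_continuous R_AbsRing R_NormedModule).
    exists (r' u); apply (r_derive u Hu').
  - intros Hr0.
    pose proof (leaf_energy u Hu') as HE.
    rewrite Hr0 in HE; nra.
Qed.

Lemma leaf_ratio_derive (s u : R) :
  - e < u < e -> - e < s - u < e ->
  is_derive (fun v => leaf_ratio (r v) (r (s - v)) (r' v) (r' (s - v))) u 0.
Proof.
  intros Hu Hsu.
  destruct (r_derive u Hu) as [Hr1 Hr1'].
  destruct (r_derive (s - u) Hsu) as [Hr2 Hr2'].
  pose proof (leaf_energy u Hu) as HX.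
  pose proof (leaf_energy (s - u) Hsu) as HY.
  pose proof (leaf_ratio_den_pos _ _ _ _ (leaf_pos u Hu) (leaf_pos (s - u) Hsu) HX HY)
    as HD.
  unfold leaf_ratio.
  auto_derive; [repeat split; try (eexists; eassumption); apply Rgt_not_eq, HD |].
  derive_from_hyps.
  replace (s + - u) with (s - u) by ring.
  set (x := r u) in *; set (y := r (s - u)) in *.
  set (X := r' u) in *; set (Y := r' (s - u)) in *.
  (* The quotient-rule numerator lies in the ideal generated by the two
     energy relations; these are the cofactors. *)
  transitivity
    (((2 * x * y ^ 2 * Y + 2 * x * Y + 2 * x ^ 3 * y ^ 4 * Y + 2 * x ^ 3 * y ^ 2 * Y
       - y * X * Y ^ 2 + x * Y ^ 3) * (X ^ 2 - (x ^ 4 - 1))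
      + (- 2 * x ^ 2 * y * X - y * X - 2 * x ^ 4 * y ^ 3 * X - 2 * x ^ 2 * y ^ 3 * X
         - x ^ 4 * y * X + x ^ 5 * Y - x * Y) * (Y ^ 2 - (y ^ 4 - 1)))
     / (x * y * (x ^ 2 + 1) * (y ^ 2 + 1) + X * Y) ^ 2).
  - field; lra.
  - rewrite HX, HY; field; lra.
Qed.

Lemma leaf_duplication l :
  - e < 2 * l < e ->
  r (2 * l) = (r l ^ 4 + 2 * r l ^ 2 - 1) / (- r l ^ 4 + 2 * r l ^ 2 + 1).
Proof.
  intros Hs.
  assert (Hl : - e < l < e) by lra.
  assert (Hinv : leaf_ratio (r 0) (r (2 * l - 0)) (r' 0) (r' (2 * l - 0)) =
                 leaf_ratio (r l) (r (2 * l - l)) (r' l) (r' (2 * l - l))).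
  { apply (eq_is_derive_segment
      (fun v => leaf_ratio (r v) (r (2 * l - v)) (r' v) (r' (2 * l - v)))).
    intros u Hu; apply leaf_ratio_derive; lra. }
  replace (2 * l - 0) with (2 * l) in Hinv by ring.
  replace (2 * l - l) with l in Hinv by ring.
  pose proof (leaf_pos (2 * l) Hs) as HR.
  pose proof (leaf_energy l Hl) as HC.
  rewrite leaf_ratio_diag in Hinv by exact HC.
  replace (leaf_ratio (r 0) (r (2 * l)) (r' 0) (r' (2 * l))) with (/ r (2 * l)) in Hinv
    by (rewrite r_0, r'_0; unfold leaf_ratio; field; nra).
  set (C := r l) in *; set (R0 := r (2 * l)) in *.
  assert (HQ : 0 < C ^ 4 + 2 * C ^ 2 - 1) by nra.
  assert (HP : - C ^ 4 + 2 * C ^ 2 + 1 <> 0).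
  { intros HP0; rewrite HP0 in Hinv.
    assert (Hz : / R0 = 0) by (rewrite Hinv; field; lra).
    apply (Rinv_neq_0_compat R0); lra. }
  rewrite <- (Rinv_inv R0), Hinv; field; lra.
Qed.

End Duplication.

Theorem mainTheorem9 :
  forall r : R -> R, is_cleafh 2 r ->
  forall l : R, - eta 2 < 2 * l < eta 2 ->
    r (2 * l) =
      (r l ^ 4 + 2 * r l ^ 2 - 1) / (- r l ^ 4 + 2 * r l ^ 2 + 1).
Proof.
  intros r [r' [Hderive [Hr0 Hr'0]]].
  exact (leaf_duplication r r' (eta 2) Hderive Hr0 Hr'0).
Qed.
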